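(* Let $R$ be a ring with identity and involution $*$, and let $a,b\in R$ with $aR=a^2R$. The following are equivalent: (1) $a$ is core invertible with $a^{\oplus}=b$; (2) $ba^2=a$, $(ab)^*=ab$ and $bR\subseteq aR$; (3) $a$ has a $\{1,3\}$-inverse, and $ba^2=a$ and $b=ba\hat a$ for some $\{1,3\}$-inverse $\hat a$ of $a$.
   Context: An involution on $R$ satisfies $(a^* )^*=a$, $(ab)^*=b^*a^*$, $(a+b)^*=a^*+b^*$. An element $x\in R$ is a core inverse of $a$ if $axa=a$, $xR=aR$ and $Rx=Ra^*$; it is unique when it exists and is denoted $a^{\oplus}$. An element $\hat a$ is a $\{1,3\}$-inverse of $a$ if $a\hat a a=a$ and $(a\hat a)^*=a\hat a$. $cR=\{cr: r\in R\}$. *)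

From HB Require Import structures.
From mathcomp Require Import all_boot all_algebra.
Set Implicit Arguments. Unset Strict Implicit. Unset Printing Implicit Defensive.
Import GRing.Theory.
Local Open Scope ring_scope.

(* A ring with identity; pzRingType allows also the zero ring (most general). *)

Definition involution (R : pzRingType) (star : R -> R) : Prop :=
  (forall a, star (star a) = a) /\
  (forall a b, star (a * b) = star b * star a) /\
  (forall a b, star (a + b) = star a + star b).

Definition rideal (R : pzRingType) (c : R) : R -> Prop := fun y => exists r, y = c * r.
Definition lideal (R : pzRingType) (c : R) : R -> Prop := fun y => exists r, y = r * c.

Definition set_sub (R : Type) (A B : R -> Prop) : Prop := forall y, A y -> B y.
Definition set_eq (R : Type) (A B : R -> Prop) : Prop := forall y, A y <-> B y.

Definition core_inverse (R : pzRingType) (star : R -> R) (a x : R) : Prop :=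
  a * x * a = a /\ set_eq (rideal x) (rideal a) /\ set_eq (lideal x) (lideal (star a)).

Definition inv13 (R : pzRingType) (star : R -> R) (a ah : R) : Prop :=
  a * ah * a = a /\ star (a * ah) = a * ah.

(* Since a ∈ a^2 R, the identity b a^2 = a already gives a b a = a and b a ∈ aR.
   A core inverse b of a is hermitian on the left, (a b)^* = a b, and satisfies
   b a b = b; conversely these identities together with b a^2 = a and bR ⊆ aR
   give bR = aR and Rb = Ra^*, because a = b a^2, b = b (a b)^* = b b^* a^* and
   a^* = (a b a)^* = a^* a b.  For (3), b is itself a {1,3}-inverse, while
   b = b a â forces a b = a b a â = a â, which is hermitian. *)
From HB Require Import structures.
From mathcomp Require Import all_boot all_algebra.
Import GRing.Theory.
Set Implicit Arguments. Unset Strict Implicit. Unset Printing Implicit Defensive.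
Local Open Scope ring_scope.

Section PrincipalIdeals.
Variable R : pzRingType.
Implicit Types a b c x : R.

Lemma rideal_id c : rideal c c.
Proof. by exists 1; rewrite mulr1. Qed.

Lemma lideal_id c : lideal c c.
Proof. by exists 1; rewrite mul1r. Qed.

Lemma rideal_sub c x : rideal c x -> set_sub (rideal x) (rideal c).
Proof. by case=> r -> y [z ->]; exists (r * z); rewrite mulrA. Qed.

Lemma lideal_sub c x : lideal c x -> set_sub (lideal x) (lideal c).
Proof. by case=> r -> y [z ->]; exists (z * r); rewrite mulrA. Qed.

Lemma set_eq_sub (A B : R -> Prop) : set_sub A B -> set_sub B A -> set_eq A B.
Proof. by move=> AB BA y; split; [apply: AB | apply: BA]. Qed.

Lemma inner_of_mul_sqr a b : rideal (a ^+ 2) a -> b * a ^+ 2 = a -> a * b * a = a.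
Proof. by case=> s Es Eba2; rewrite {2}Es mulrA -(mulrA a b) Eba2 -Es. Qed.

Lemma rideal_mul_sqr a b : rideal (a ^+ 2) a -> b * a ^+ 2 = a -> rideal a (b * a).
Proof. by case=> s Es Eba2; exists s; rewrite {1}Es mulrA Eba2. Qed.

Lemma outer_of_mul_sqr a b : b * a ^+ 2 = a -> rideal a b -> b * a * b = b.
Proof. by move=> Eba2 [r Eb]; rewrite {2}Eb mulrA -(mulrA b a a) -expr2 Eba2 -Eb. Qed.

Lemma mul_sqr_of_outer a b : b * a * b = b -> rideal b a -> b * a ^+ 2 = a.
Proof. by move=> Ebab [r Ea]; rewrite expr2 {2}Ea !mulrA Ebab -Ea. Qed.

End PrincipalIdeals.

Section CoreInverse.
Variables (R : pzRingType) (star : R -> R).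
Hypothesis Hstar : involution star.
Implicit Types a b ah x : R.

Let starK x : star (star x) = x. Proof. by case: Hstar. Qed.
Let starM x y : star (x * y) = star y * star x. Proof. by case: Hstar => _ []. Qed.

Lemma core_inverse_herm a b : core_inverse star a b -> star (a * b) = a * b.
Proof.
case=> Eaba [_ Hl].
have [t Eb] : lideal (star a) b by apply/Hl/lideal_id.
have Ea : star a = star a * star b * star a by rewrite -{1}Eaba !starM mulrA.
have Eb' : b = b * star b * star a by rewrite {1}Eb {1}Ea !mulrA -Eb.
have Eab : a * b = a * b * star (a * b) by rewrite starM {1}Eb' !mulrA.
by rewrite Eab starM starK.
Qed.

Lemma outer_of_herm a b :
  a * b * a = a -> star (a * b) = a * b -> lideal (star a) b -> b * a * b = b.
Proof.
move=> Eaba Hab [t Eb].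
have Ea : star a = star a * (a * b) by rewrite -{1}Eaba starM Hab.
by rewrite {1}Eb -!mulrA -Ea -Eb.
Qed.

Lemma core_inverse_outer a b : core_inverse star a b -> b * a * b = b.
Proof.
move=> Hcore; have [Eaba [_ Hl]] := Hcore.
by apply: (outer_of_herm Eaba (core_inverse_herm Hcore)); apply/Hl/lideal_id.
Qed.

Lemma core_inverse_mul_sqr a b : core_inverse star a b -> b * a ^+ 2 = a.
Proof.
move=> Hcore; apply: mul_sqr_of_outer (core_inverse_outer Hcore) _.
by case: Hcore => _ [Hr _]; apply/Hr/rideal_id.
Qed.

Lemma core_inverse_rideal a b : core_inverse star a b -> set_sub (rideal b) (rideal a).
Proof. by case=> _ [Hr _]; apply/rideal_sub/Hr/rideal_id. Qed.

Lemma core_inverse_of_herm a b :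
    b * a ^+ 2 = a -> a * b * a = a -> star (a * b) = a * b ->
    set_sub (rideal b) (rideal a) -> core_inverse star a b.
Proof.
move=> Eba2 Eaba Hab Hsub.
have Ebab : b * a * b = b by apply/outer_of_mul_sqr/Hsub/rideal_id.
split=> //; split; apply: set_eq_sub => //.
- by apply: rideal_sub; exists (a ^+ 2); rewrite Eba2.
- apply: lideal_sub; exists (b * star b).
  by rewrite -mulrA -starM Hab mulrA Ebab.
- apply: lideal_sub; exists (star a * a).
  by rewrite -{1}Eaba starM Hab !mulrA.
Qed.

Lemma herm_rideal_of_inv13 a b ah :
    rideal (a ^+ 2) a -> b * a ^+ 2 = a -> inv13 star a ah -> b = b * a * ah ->
    star (a * b) = a * b /\ set_sub (rideal b) (rideal a).
Proof.
move=> Ha Eba2 [_ Hah] Eb.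
have Eab : a * b = a * ah by rewrite {1}Eb !mulrA (inner_of_mul_sqr Ha Eba2).
split; first by rewrite Eab.
have [s Es] := rideal_mul_sqr Ha Eba2.
by apply: rideal_sub; exists (s * ah); rewrite {1}Eb Es mulrA.
Qed.

End CoreInverse.

Theorem proposition3p11 (R : pzRingType) (star : R -> R) (a b : R)
  (Hstar : involution star)
  (Ha : set_eq (rideal a) (rideal (a ^+ 2))) :
  [/\ (core_inverse star a b <->
       (b * a ^+ 2 = a /\ star (a * b) = a * b /\ set_sub (rideal b) (rideal a))),
      ((b * a ^+ 2 = a /\ star (a * b) = a * b /\ set_sub (rideal b) (rideal a)) <->
       ((exists ah, inv13 star a ah) /\ b * a ^+ 2 = a /\
        exists ah, inv13 star a ah /\ b = b * a * ah))
    & (core_inverse star a b <->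
       ((exists ah, inv13 star a ah) /\ b * a ^+ 2 = a /\
        exists ah, inv13 star a ah /\ b = b * a * ah))].
Proof.
have Ha2 : rideal (a ^+ 2) a by apply/Ha/rideal_id.
have E12 : core_inverse star a b <->
    (b * a ^+ 2 = a /\ star (a * b) = a * b /\ set_sub (rideal b) (rideal a)).
  split=> [Hcore | [Eba2 [Hab Hsub]]].
    split; first exact: (core_inverse_mul_sqr Hstar Hcore).
    split; first exact: (core_inverse_herm Hstar Hcore).
    exact: core_inverse_rideal Hcore.
  exact: (core_inverse_of_herm Hstar Eba2 (inner_of_mul_sqr Ha2 Eba2) Hab Hsub).
have E23 : (b * a ^+ 2 = a /\ star (a * b) = a * b /\ set_sub (rideal b) (rideal a)) <->
    ((exists ah, inv13 star a ah) /\ b * a ^+ 2 = a /\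
     exists ah, inv13 star a ah /\ b = b * a * ah).
  split=> [[Eba2 [Hab Hsub]] | [_ [Eba2 [ah [Hah Eb]]]]].
    have Hb : inv13 star a b by split; [apply: inner_of_mul_sqr Ha2 Eba2 |].
    have Ebab : b * a * b = b by apply/outer_of_mul_sqr/Hsub/rideal_id.
    by split; [exists b | split=> //; exists b].
  by split=> //; apply: herm_rideal_of_inv13 Ha2 Eba2 Hah Eb.
by split=> //; tauto.
Qed.
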